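(* For every integer $k\ge 7$, let $C_k$ be the cycle on $k$ vertices and $G=KB(C_k)$. Then for every vertex $q$ of $G$, the graph $G-\{q\}$ is not a biclique graph.
   Context: All graphs are finite, simple, undirected and connected. A biclique of a graph $H$ is a maximal (with respect to vertex-set inclusion) set of vertices inducing a complete bipartite subgraph $K_{r,s}$ with $r,s\ge 1$. The biclique graph $KB(H)$ is the intersection graph of the family of all bicliques of $H$: its vertices are the bicliques of $H$, and two bicliques are adjacent iff they share at least one vertex. A graph $G$ is a biclique graph if $G=KB(H)$ (up to isomorphism) for some graph $H$. *)

From mathcomp Require Import all_boot.
Set Implicit Arguments. Unset Strict Implicit. Unset Printing Implicit Defensive.

Definition simple_graph (T : finType) (e : rel T) : Prop :=
  symmetric e /\ irreflexive e.

Definition connected_graph (T : finType) (e : rel T) : Prop :=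
  forall x y : T, connect e x y.

Definition induces_Krs (T : finType) (e : rel T) (B : {set T}) : bool :=
  [exists X : {set T}, exists Y : {set T},
     [&& X :|: Y == B, [disjoint X & Y], X != set0, Y != set0,
         [forall x in X, forall y in Y, e x y],
         [forall x in X, forall x' in X, ~~ e x x'] &
         [forall y in Y, forall y' in Y, ~~ e y y']]].

Definition is_biclique (T : finType) (e : rel T) (B : {set T}) : bool :=
  maxset (induces_Krs e) B.

Definition KB_vertex (T : finType) (e : rel T) : finType :=
  {B : {set T} | is_biclique e B}.

Definition KB_rel (T : finType) (e : rel T) : rel (KB_vertex e) :=
  fun B1 B2 => (B1 != B2) && (val B1 :&: val B2 != set0).


Definition graph_iso (T1 T2 : finType) (e1 : rel T1) (e2 : rel T2) : Prop :=
  exists f : T1 -> T2, bijective f /\ forall x y, e2 (f x) (f y) = e1 x y.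

Definition is_biclique_graph (V : finType) (g : rel V) : Prop :=
  exists (T : finType) (e : rel T),
    simple_graph e /\ connected_graph e /\ graph_iso (@KB_rel T e) g.

Definition cycle_rel (k : nat) : rel 'I_k :=
  fun i j => (val j == (val i).+1 %% k) || (val i == (val j).+1 %% k).


Definition del_vertex_type (V : finType) (q : V) : finType := {v : V | v != q}.

Definition del_vertex_rel (V : finType) (g : rel V) (q : V) : rel (del_vertex_type q) :=
  fun x y => g (val x) (val y).

Arguments KB_vertex : clear implicits.
Arguments KB_rel : clear implicits.
Arguments cycle_rel : clear implicits.
Arguments del_vertex_type : clear implicits.
Arguments del_vertex_rel : clear implicits.

From mathcomp Require Import all_boot zify.
Set Implicit Arguments. Unset Strict Implicit. Unset Printing Implicit Defensive.

(* The proof isolates a necessary condition satisfied by every biclique graph,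
   the edge-triangle property: if uv is an edge and u has a neighbour w <> v
   not adjacent to v, then uv lies in a triangle.  For KB(H) it is proved on
   the bicliques B1 = u and B2 = v of H.  If no third biclique met both, then
   no set inducing a complete bipartite graph could straddle B1 and B2 (meet
   both while leaving both).  The complete bipartite structure of B1 and B2
   then forces every private vertex of B1 to be adjacent to B1 :&: B2 and the
   private part of B1 to be independent; a private vertex of B1 lying in w has
   a neighbour outside B2, which produces a straddling edge or 3-path.

   For the cycle, the bicliques of C_k are exactly the k stars N[i], and two
   stars are adjacent in KB(C_k) when their closed neighbourhoods meet.  After
   deleting the star of j, the stars of j+1, j-1 and j+2 violate the
   edge-triangle property: the only common neighbour of the stars of j+1 and
   j-1 was the deleted star of j. *)

Definition edge_triangle_property (V : finType) (g : rel V) : Prop :=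
  forall u v w, g u v -> g u w -> v != w -> ~~ g v w -> exists x, g x u && g x v.

Section BicliqueStructure.
Variables (T : finType) (e : rel T).
Hypotheses (e_sym : symmetric e) (e_irr : irreflexive e).

Lemma KrsP (B : {set T}) : induces_Krs e B ->
  exists X : {set T},
    (forall u, u \in B -> exists2 v, v \in B & e u v) /\
    {in B &, forall u v, e u v = ((u \in X) != (v \in X))}.
Proof.
case/existsP=> X /existsP[Y /and5P[/eqP defB _ /set0Pn[x0 x0X] /set0Pn[y0 y0Y]]].
case/and3P=> /forall_inP eXY /forall_inP eXX /forall_inP eYY.
have cross u v : u \in X -> v \in Y -> e u v by move=> /eXY/forall_inP; apply.
have inY v : v \in B -> v \notin X -> v \in Y by rewrite -defB inE => /orP[->|].
exists X; split=> [u uB | u v uB vB].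
  case/boolP: (u \in X) => uX.
    by exists y0; [rewrite -defB inE y0Y orbT | exact: cross].
  by exists x0; [rewrite -defB inE x0X | rewrite e_sym; exact: cross (inY u uB uX)].
case/boolP: (u \in X) => uX; case/boolP: (v \in X) => vX /=.
- by apply/negbTE; move/eXX/forall_inP: uX; apply.
- exact: cross (inY v vB vX).
- by rewrite e_sym; exact: cross (inY u uB uX).
- by apply/negbTE; move/eYY/forall_inP: (inY u uB uX); apply; exact: inY.
Qed.

Lemma Krs_neighbour B u : induces_Krs e B -> u \in B -> exists2 v, v \in B & e u v.
Proof. by case/KrsP=> X [nbr _]; apply: nbr. Qed.

Lemma Krs_edge B a b c : induces_Krs e B -> a \in B -> b \in B -> c \in B ->
  e a b -> e c a || e c b.
Proof.
case/KrsP=> X [_ side] aB bB cB; rewrite !side //.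
by case: (a \in X); case: (b \in X); case: (c \in X).
Qed.

Lemma Krs_nonedge B a b c : induces_Krs e B -> a \in B -> b \in B -> c \in B ->
  ~~ e a b -> e c a = e c b.
Proof.
case/KrsP=> X [_ side] aB bB cB; rewrite !side //.
by case: (a \in X); case: (b \in X); case: (c \in X).
Qed.

(* Sufficient condition for X :|: Y to induce a complete bipartite graph;
   disjointness of the sides follows from irreflexivity. *)
Lemma KrsI (X Y : {set T}) : X != set0 -> Y != set0 ->
  {in X & Y, forall x y, e x y} -> {in X &, forall x x', ~~ e x x'} ->
  {in Y &, forall y y', ~~ e y y'} -> induces_Krs e (X :|: Y).
Proof.
move=> X0 Y0 eXY eXX eYY; apply/existsP; exists X; apply/existsP; exists Y.
rewrite eqxx X0 Y0 /=; apply/and4P; split.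
- rewrite -setI_eq0; apply/eqP/setP => x; rewrite !inE; apply/negbTE/andP => -[xX xY].
  by move: (eXY x x xX xY); rewrite e_irr.
- by apply/forall_inP => x xX; apply/forall_inP => y yY; exact: eXY.
- by apply/forall_inP => x xX; apply/forall_inP => y yY; exact: eXX.
- by apply/forall_inP => x xX; apply/forall_inP => y yY; exact: eYY.
Qed.

(* The two ends of a path a - b - c lie together in a set inducing a
   complete bipartite graph: the edge {a, c}, or the path itself. *)
Lemma ends_Krs a b c : e a b -> e b c -> a != c ->
  exists2 S, induces_Krs e S & (a \in S) && (c \in S).
Proof.
have set1_neq0 (x : T) : [set x] != set0 by apply/set0Pn; exists x; rewrite inE.
move=> ab bc ac; case/boolP: (e a c) => [ac_edge | nac].
  exists ([set a] :|: [set c]); last by rewrite !inE !eqxx orbT.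
  by apply: KrsI => // x y /set1P-> /set1P->; rewrite ?e_irr.
exists ([set b] :|: [set a; c]); last by rewrite !inE !eqxx !orbT.
apply: KrsI => // [|x y /set1P->|x y /set1P-> /set1P->|x y]; rewrite ?e_irr //.
- by apply/set0Pn; exists a; rewrite !inE eqxx.
- by rewrite !inE => /orP[]/eqP->; rewrite // e_sym.
- by rewrite !inE => /orP[]/eqP-> /orP[]/eqP->; rewrite ?e_irr // e_sym.
Qed.

(* This is what the absence of
   a third biclique meeting B1 and B2 yields, since such a set extends to a
   biclique. *)
Definition unstraddled (B1 B2 : {set T}) : Prop :=
  forall S, induces_Krs e S -> forall x y u w,
    x \in S :&: B1 -> y \in S :&: B2 -> u \in S :\: B1 -> w \in S :\: B2 -> False.

Lemma unstraddled_sym B1 B2 : unstraddled B1 B2 -> unstraddled B2 B1.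
Proof. by move=> NS S KS x y u w xS yS uS wS; exact: (NS S KS y x w u). Qed.

Section Unstraddled.
Variables B1 B2 : {set T}.
Hypotheses (NS : unstraddled B1 B2) (K1 : induces_Krs e B1) (K2 : induces_Krs e B2).

(* No vertex sees both a private vertex of B1 and a private vertex of B2:
   the path through it would straddle B1 and B2. *)
Lemma no_private_bridge p q r :
  p \in B1 :\: B2 -> q \in B2 :\: B1 -> e r p -> e r q -> False.
Proof.
move=> pB qB rp rq.
have pq : p != q by apply: contraTneq (setDP qB).1 => <-; exact: (setDP pB).2.
have pr : e p r by rewrite e_sym.
have [S KS /andP[pS qS]] := ends_Krs pr rq pq.
case/setDP: pB qB => p1 p2 /setDP[q2 q1].
by apply: (NS KS (_ : p \in S :&: B1) (_ : q \in S :&: B2) (_ : q \in S :\: B1)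
  (_ : p \in S :\: B2)); rewrite !inE ?pS ?qS ?p1 ?p2 ?q1 ?q2.
Qed.

Lemma private_shared_neighbour p r0 : p \in B1 :\: B2 -> r0 \in B1 :&: B2 ->
  exists2 r, r \in B1 :&: B2 & e p r.
Proof.
move=> pB r0B; case/boolP: [exists r in B1 :&: B2, e p r].
  by case/exists_inP=> r; exists r.
move/exists_inPn=> noshare; exfalso.
have [/setDP[p1 p2] /setIP[r1 r2]] := (pB, r0B).
have [y y1 py] := Krs_neighbour K1 p1.
have y2 : y \notin B2 by apply: contraTN py => y2; apply: noshare; rewrite inE y1.
have r0y : e r0 y by rewrite e_sym -(Krs_nonedge K1 p1 r1 y1 (noshare _ r0B)) e_sym.
have [s s2 r0s] := Krs_neighbour K2 r2.
case/boolP: (s \in B1) => s1.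
  have sB : s \in B1 :&: B2 by rewrite inE s1 s2.
  have ps : e p s by rewrite e_sym (Krs_nonedge K1 p1 r1 s1 (noshare _ r0B)) e_sym.
  by move: (noshare s sB); rewrite ps.
have [yB sB] : y \in B1 :\: B2 /\ s \in B2 :\: B1 by rewrite !inE y1 y2 s1 s2.
exact: no_private_bridge yB sB r0y r0s.
Qed.

End Unstraddled.

Lemma private_independent B1 B2 p p' q r0 :
  unstraddled B1 B2 -> induces_Krs e B1 -> induces_Krs e B2 ->
  p \in B1 :\: B2 -> p' \in B1 :\: B2 -> q \in B2 :\: B1 -> r0 \in B1 :&: B2 ->
  ~~ e p p'.
Proof.
move=> NS K1 K2 pB p'B qB r0B; apply/negP => pp'.
have r0B' : r0 \in B2 :&: B1 by rewrite setIC.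
have [r rB qr] := private_shared_neighbour (unstraddled_sym NS) K2 K1 qB r0B'.
have [/setDP[p1 _] /setDP[p'1 _]] := (pB, p'B).
have /setIP[_ r1] := rB.
by case/orP: (Krs_edge K1 p1 p'1 r1 pp') => rp;
  apply: (no_private_bridge NS _ qB rp); rewrite // e_sym.
Qed.

(* Either z is
   private in B1, against independence, or z and a neighbour of a in
   B1 :&: B2 are the ends of a straddling path. *)
Lemma unstraddled_contra B1 B2 r0 q a z :
  unstraddled B1 B2 -> induces_Krs e B1 -> induces_Krs e B2 ->
  r0 \in B1 :&: B2 -> q \in B2 :\: B1 -> a \in B1 :\: B2 -> z \notin B2 ->
  e a z -> False.
Proof.
move=> NS K1 K2 r0B qB aB z2 az.
case/boolP: (z \in B1) => z1.
  have zB : z \in B1 :\: B2 by rewrite inE z1 z2.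
  by move: (private_independent NS K1 K2 aB zB qB r0B); rewrite az.
have [r rB ar] := private_shared_neighbour NS K1 K2 aB r0B.
have zr : z != r by apply: contraNneq z1 => ->; exact: (setIP rB).1.
have za : e z a by rewrite e_sym.
have [S KS /andP[zS rS]] := ends_Krs za ar zr.
case/setIP: rB => r1 r2.
by apply: (NS S KS r r z z); rewrite !inE ?zS ?rS ?z1 ?z2 ?r1 ?r2.
Qed.

Lemma biclique_common_neighbour B1 B2 r0 a z :
  is_biclique e B1 -> is_biclique e B2 -> B1 != B2 ->
  r0 \in B1 :&: B2 -> a \in B1 :\: B2 -> z \notin B2 -> e a z ->
  exists B, [/\ is_biclique e B, B != B1, B != B2, B :&: B1 != set0 & B :&: B2 != set0].
Proof.
move=> M1 M2 n12 r0B aB z2 az.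
case/boolP: [exists B, [&& is_biclique e B, B != B1, B != B2,
                          B :&: B1 != set0 & B :&: B2 != set0]].
  by case/existsP=> B /and5P[]; exists B.
move/existsPn=> none; exfalso.
have NS : unstraddled B1 B2.
  move=> S KS x y u w xS yS uS wS.
  have [B MB /subsetP SB] := maxset_exists KS.
  have neq B' v : v \in S :\: B' -> B != B'.
    by case/setDP=> vS vB'; apply: contraNneq vB' => <-; exact: SB.
  have meet B' v : v \in S :&: B' -> B :&: B' != set0.
    by case/setIP=> vS vB'; apply/set0Pn; exists v; rewrite inE SB.
  move: (none B); rewrite /is_biclique MB (neq _ _ uS) (neq _ _ wS).
  by rewrite (meet _ _ xS) (meet _ _ yS).
have [q qB2 qB1] : exists2 q, q \in B2 & q \notin B1.
  by apply/subsetPn; apply: contra n12 => /(maxsetsup M2 (maxsetp M1)) ->.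
have qB : q \in B2 :\: B1 by rewrite inE qB2 qB1.
exact: (unstraddled_contra NS (maxsetp M1) (maxsetp M2) r0B qB aB z2 az).
Qed.

Lemma KB_relE (B1 B2 : KB_vertex T e) :
  KB_rel T e B1 B2 = (val B1 != val B2) && (val B1 :&: val B2 != set0).
Proof. by rewrite /KB_rel -(inj_eq val_inj). Qed.

(* KB(H) has the edge-triangle property: for bicliques u ~ v and u ~ w with w
   disjoint from v, a vertex of u :&: w and its neighbour in w provide the
   hypotheses of biclique_common_neighbour. *)
Lemma KB_edge_triangle : edge_triangle_property (KB_rel T e).
Proof.
move=> u v w; rewrite !KB_relE -(inj_eq val_inj) => /andP[n12 /set0Pn[r0 r0B]].
case/andP=> _ /set0Pn[a /setIP[a1 a3]] n23; rewrite n23 andTb negbK setI_eq0 => d23.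
have out2 x : x \in val w -> x \notin val v by move=> x3; rewrite (disjointFl d23 x3).
have [z z3 az] := Krs_neighbour (maxsetp (valP w)) a3.
have aB : a \in val u :\: val v by rewrite inE a1 out2.
have [B [MB nB1 nB2 mB1 mB2]] :=
  biclique_common_neighbour (valP u) (valP v) n12 r0B aB (out2 z z3) az.
by exists (exist _ B MB); rewrite !KB_relE /= nB1 nB2 mB1 mB2.
Qed.

End BicliqueStructure.

Lemma edge_triangle_iso (T1 T2 : finType) (e1 : rel T1) (e2 : rel T2) :
  graph_iso e1 e2 -> edge_triangle_property e1 -> edge_triangle_property e2.
Proof.
case=> f [[g fK gK] ef] P u v w uv uw vw nvw.
have ef' x y : e2 x y = e1 (g x) (g y) by rewrite -ef !gK.
rewrite !ef' in uv uw nvw.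
have gvw : g v != g w by rewrite (inj_eq (can_inj gK)).
have [x /andP[xu xv]] := P _ _ _ uv uw gvw nvw.
by exists (f x); rewrite !ef' fK xu xv.
Qed.

Lemma biclique_graph_edge_triangle (V : finType) (g : rel V) :
  is_biclique_graph g -> edge_triangle_property g.
Proof.
case=> T [e [[e_sym e_irr] [_ iso]]].
exact: edge_triangle_iso iso (KB_edge_triangle e_sym e_irr).
Qed.

Lemma modS_small k a : a < k ->
  (a.+1 = k /\ a.+1 %% k = 0) \/ (a.+1 < k /\ a.+1 %% k = a.+1).
Proof.
move=> ltak; case: (ltngtP a.+1 k) => [lt | | ->]; last by rewrite modnn; left.
- by right; rewrite modn_small.
- by lia.
Qed.

Section CycleBicliques.
Variable k : nat.
Hypothesis k_ge7 : 7 <= k.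

Let k_gt0 : 0 < k := leq_trans (isT : 0 < 7) k_ge7.

Definition cyc_adj (a b : nat) : Prop :=
  b = a.+1 \/ a = b.+1 \/ (a.+1 = k /\ b = 0) \/ (b.+1 = k /\ a = 0).

Definition cyc_near (a b : nat) : Prop := a = b \/ cyc_adj a b.

Lemma cycle_relE (i j : 'I_k) : cycle_rel k i j <-> cyc_adj i j.
Proof.
case: i j => [i ltik] [j ltjk]; rewrite /cycle_rel /cyc_adj /=.
by move: (modS_small ltik) (modS_small ltjk); lia.
Qed.

Lemma cyc_adj_sym a b : cyc_adj a b -> cyc_adj b a.
Proof. rewrite /cyc_adj; lia. Qed.

Lemma cycle_rel_irr : irreflexive (cycle_rel k).
Proof. by move=> i; apply/negbTE/negP => /cycle_relE; rewrite /cyc_adj; lia. Qed.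

Lemma cyc_triangle_free a b c : a < k -> b < k -> c < k ->
  cyc_adj a b -> cyc_adj a c -> ~ cyc_adj b c.
Proof. rewrite /cyc_adj; lia. Qed.

Lemma cyc_no_square a b c d : a < k -> b < k -> c < k -> d < k ->
  cyc_adj a b -> cyc_adj a c -> cyc_adj d b -> cyc_adj d c -> a <> d -> b <> c -> False.
Proof. rewrite /cyc_adj; lia. Qed.

Definition succ_ord (i : 'I_k) : 'I_k := Ordinal (ltn_pmod i.+1 k_gt0).
Definition pred_ord (i : 'I_k) : 'I_k := Ordinal (ltn_pmod (i + k.-1) k_gt0).

Lemma succ_ordE (i : 'I_k) :
  (i.+1 = k /\ succ_ord i = 0 :> nat) \/ (i.+1 < k /\ succ_ord i = i.+1 :> nat).
Proof. exact: modS_small (ltn_ord i). Qed.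

Lemma pred_ordE (i : 'I_k) :
  (0 < i /\ pred_ord i = i.-1 :> nat) \/ (i = 0 :> nat /\ pred_ord i = k.-1 :> nat).
Proof.
have ltik := ltn_ord i; case: (posnP i) => [i0 | ipos] /=.
  by right; rewrite i0 add0n modn_small //; lia.
left; rewrite (_ : i + k.-1 = i.-1 + k); last by lia.
by rewrite modnDr modn_small //; lia.
Qed.

Definition star (i : 'I_k) : {set 'I_k} := [set i] :|: [set x | cycle_rel k i x].

Lemma in_star i x : x \in star i <-> cyc_near i x.
Proof.
rewrite /star !inE /cyc_near; split.
  by case/orP=> [/eqP-> | /cycle_relE]; [left | right].
by case=> [/val_inj-> | /cycle_relE->]; rewrite ?eqxx ?orbT.
Qed.

Lemma star_Krs i : induces_Krs (cycle_rel k) (star i).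
Proof.
apply: (KrsI cycle_rel_irr) => [||x y /set1P-> | x x' /set1P-> /set1P-> | y y'].
- by apply/set0Pn; exists i; rewrite inE.
- apply/set0Pn; exists (succ_ord i); rewrite inE cycle_relE.
  by case: (succ_ordE i); rewrite /cyc_adj; lia.
- by rewrite inE.
- by rewrite cycle_rel_irr.
rewrite !inE => /cycle_relE iy /cycle_relE iy'; apply/negP => /cycle_relE.
exact: cyc_triangle_free (ltn_ord i) (ltn_ord y) (ltn_ord y') iy iy'.
Qed.

(* Every set inducing a complete bipartite subgraph of C_k lies in a star:
   otherwise both sides have two vertices and C_k would contain a 4-cycle. *)
Lemma Krs_sub_star B : induces_Krs (cycle_rel k) B -> exists i, B \subset star i.
Proof.
case/existsP=> X /existsP[Y /and5P[/eqP defB _ /set0Pn[x0 x0X] /set0Pn[y0 y0Y]]].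
case/and3P=> /forall_inP eXY _ _.
have cross x y : x \in X -> y \in Y -> cyc_adj x y.
  by move=> xX yY; apply/cycle_relE; move/eXY/forall_inP: xX; apply.
have neq (u v : 'I_k) : u != v -> u <> v :> nat by move=> uv /val_inj/eqP; exact/negP.
case/boolP: [forall x in X, x == x0] => [/forall_inP X1 | /forall_inPn[x1 x1X x1x0]].
  exists x0; apply/subsetP => z; rewrite -defB inE => /orP[/X1/eqP-> | zY]; apply/in_star.
    by left.
  by right; exact: cross.
case/boolP: [forall y in Y, y == y0] => [/forall_inP Y1 | /forall_inPn[y1 y1Y y1y0]].
  exists y0; apply/subsetP => z; rewrite -defB inE => /orP[zX | /Y1/eqP->]; apply/in_star.
    by right; apply: cyc_adj_sym; exact: cross.
  by left.
exfalso; apply: (cyc_no_square _ _ _ _ (cross _ _ x0X y0Y) (cross _ _ x0X y1Y)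
  (cross _ _ x1X y0Y) (cross _ _ x1X y1Y)) => //; by apply: neq; rewrite eq_sym.
Qed.

(* A star determines its centre: if the closed neighbourhood of b contains
   a, succ a and pred a, then b = a. *)
Lemma star_sub_inj a b : star a \subset star b -> a = b.
Proof.
move/subsetP=> sub; apply: val_inj => /=.
have near_b x : x \in star a -> cyc_near b x by move/sub/in_star.
have /near_b := (proj2 (in_star a a) (or_introl erefl)).
have /near_b : succ_ord a \in star a.
  by apply/in_star; right; case: (succ_ordE a); rewrite /cyc_adj; lia.
have /near_b : pred_ord a \in star a.
  by apply/in_star; right; case: (pred_ordE a); rewrite /cyc_adj; lia.
move: (succ_ordE a) (pred_ordE a) (ltn_ord a) (ltn_ord b).
rewrite /cyc_near /cyc_adj; lia.
Qed.

(* Stars are maximal, since every K_{r,s}-inducing set lies in a star. *)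
Lemma star_biclique i : is_biclique (cycle_rel k) (star i).
Proof.
apply/maxsetP; split => [|B KB sub]; first exact: star_Krs.
have [x sub_x] := Krs_sub_star KB.
have ix := star_sub_inj (subset_trans sub sub_x); subst x.
by apply/eqP; rewrite eqEsubset sub_x sub.
Qed.

Lemma biclique_star B : is_biclique (cycle_rel k) B -> exists i, B = star i.
Proof.
move=> MB; have [i sub] := Krs_sub_star (maxsetp MB).
by exists i; rewrite (maxsetsup MB (star_Krs i) sub).
Qed.

Definition star_vertex (i : 'I_k) : KB_vertex 'I_k (cycle_rel k) :=
  exist _ (star i) (star_biclique i).

Lemma star_vertex_surj (u : KB_vertex 'I_k (cycle_rel k)) : exists i, u = star_vertex i.
Proof. by have [i Ei] := biclique_star (valP u); exists i; apply: val_inj. Qed.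

Lemma star_neq (a b : 'I_k) : a <> b :> nat -> star a != star b.
Proof. by move=> ab; apply/eqP => Eab; apply/ab/(congr1 val)/star_sub_inj; rewrite Eab. Qed.

Lemma star_vertex_neq (a b : 'I_k) : a <> b :> nat -> star_vertex a != star_vertex b.
Proof. by rewrite -(inj_eq val_inj); exact: star_neq. Qed.

Lemma KB_starP (a b : 'I_k) :
  KB_rel _ _ (star_vertex a) (star_vertex b) <->
  a <> b :> nat /\ exists x : 'I_k, cyc_near a x /\ cyc_near b x.
Proof.
rewrite KB_relE /=; split.
  case/andP=> ab /set0Pn[x /setIP[/in_star ax /in_star bx]]; split; last by exists x.
  by move/val_inj=> Eab; move: ab; rewrite Eab eqxx.
case=> ab [x [ax bx]]; rewrite star_neq //=.
by apply/set0Pn; exists x; rewrite inE; apply/andP; split; apply/in_star.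
Qed.

Definition window (j n p c : nat) : Prop :=
  [/\ j < k, (j.+1 = k /\ n = 0) \/ (j.+1 < k /\ n = j.+1),
      (0 < j /\ p = j.-1) \/ (j = 0 /\ p = k.-1)
    & (n.+1 = k /\ c = 0) \/ (n.+1 < k /\ c = n.+1)].

Lemma windowP (j : 'I_k) : window j (succ_ord j) (pred_ord j) (succ_ord (succ_ord j)).
Proof. by split; [exact: ltn_ord | exact: succ_ordE | exact: pred_ordE | exact: succ_ordE]. Qed.

Section Window.
Variables j n p c : nat.
Hypothesis W : window j n p c.

Lemma window_off_centre : [/\ n <> j, p <> j & c <> j].
Proof. by case: W; split; lia. Qed.

Lemma window_distinct : [/\ n <> p, n <> c & p <> c].
Proof. by case: W; split; lia. Qed.

Lemma window_adj : [/\ cyc_adj n j, cyc_adj p j & cyc_adj c n].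
Proof. by case: W; rewrite /cyc_adj; split; lia. Qed.

(* p and c are at distance 3 on C_k, so their closed neighbourhoods are
   disjoint. *)
Lemma window_far x : x < k -> cyc_near p x -> cyc_near c x -> False.
Proof. by case: W; rewrite /cyc_near /cyc_adj; lia. Qed.

(* As k >= 7, j is the only vertex other than n and p whose closed
   neighbourhood meets both those of n and of p.  The proof is a case analysis
   on the wrap-around of n and p and on how x and y are near m; each case is
   linear arithmetic. *)
Lemma window_only m x y : m < k -> x < k -> y < k ->
  cyc_near m x -> cyc_near n x -> cyc_near m y -> cyc_near p y -> m <> n -> m <> p -> m = j.
Proof.
case: W => ? n_spec p_spec _; rewrite /cyc_near /cyc_adj => ? ? ?.
case: n_spec p_spec => [[? ?]|[? ?]] [[? ?]|[? ?]]; subst n p;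
 (case=> [?|[?|[?|[[? ?]|[? ?]]]]]; try subst x);
 (case=> [?|[?|[?|[[? ?]|[? ?]]]]]); lia.
Qed.

End Window.

(* KB(C_k) minus any vertex q = star j violates the edge-triangle property:
   star (j+1) ~ star (j-1) through j, star (j+1) ~ star (j+2), the stars of
   j-1 and j+2 are disjoint, and the only common neighbour of star (j+1) and
   star (j-1) is the deleted vertex star j. *)
Lemma KB_cycle_minus_vertex (q : KB_vertex 'I_k (cycle_rel k)) :
  ~ edge_triangle_property (del_vertex_rel _ (KB_rel _ (cycle_rel k)) q).
Proof.
have [j ->] := star_vertex_surj q; move=> triangle.
have W := windowP j.
have [nj pj cj] := window_off_centre W.
have [np nc pc] := window_distinct W.
have [adj_nj adj_pj adj_cn] := window_adj W.
pose vertex (i : 'I_k) (h : i <> j :> nat) : del_vertex_type _ (star_vertex j) :=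
  exist _ (star_vertex i) (star_vertex_neq h).
case: (triangle (vertex _ nj) (vertex _ pj) (vertex _ cj)); rewrite /del_vertex_rel /=.
- by apply/KB_starP; split => //; exists j; rewrite /cyc_near; split; right.
- apply/KB_starP; split => //; exists (succ_ord j); rewrite /cyc_near.
  by split; [left | right].
- by rewrite -(inj_eq val_inj) /=; exact: star_vertex_neq.
- by apply/negP => /KB_starP[_ [x [px cx]]]; exact: (window_far W (ltn_ord x) px cx).
move=> x /andP[]; have [m Em] := star_vertex_surj (val x); rewrite Em.
case/KB_starP=> mn [y [my ny]] /KB_starP[mp [z [mz pz]]].
have mj := window_only W (ltn_ord m) (ltn_ord y) (ltn_ord z) my ny mz pz mn mp.
by move: (valP x); rewrite Em (_ : m = j) ?eqxx //; exact: val_inj.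
Qed.

End CycleBicliques.

Unset Implicit Arguments.
Theorem mainTheorem2 (k : nat) (hk : 7 <= k)
    (q : KB_vertex 'I_k (cycle_rel k)) :
  ~ is_biclique_graph (del_vertex_rel _ (KB_rel 'I_k (cycle_rel k)) q).
Proof. by move/biclique_graph_edge_triangle; exact: (KB_cycle_minus_vertex hk). Qed.
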